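(* Let $Z$ be a topological space which is the disjoint union $Z=X\sqcup Y$ of two subsets (with subspace topologies), with $X$ open in $Z$. Define $f:\mathrm{Closed}(X)\to\mathrm{Closed}(Y)$ by $f(A)=\mathrm{Cl}_Z(A)\cap Y$ and $g:\mathrm{Closed}(Y)\to\mathrm{Closed}(X)$ by $g(B)=\mathrm{Cl}_Z(B)\cap X$. Then $(f,g)$ is an admissible pair and $Z$ and $X+_{f,g}Y$ have the same topology.
   Context: $\mathrm{Closed}(A)$ is the set of closed subsets of a space $A$. A map $f:\mathrm{Closed}(X)\to\mathrm{Closed}(Y)$ is admissible if $f(\emptyset)=\emptyset$ and $f(A_1\cup A_2)=f(A_1)\cup f(A_2)$. An admissible pair is a pair of admissible maps $f:\mathrm{Closed}(X)\to\mathrm{Closed}(Y)$, $g:\mathrm{Closed}(Y)\to\mathrm{Closed}(X)$ with $g(f(A))\subseteq A$ and $f(g(B))\subseteq B$ for all closed $A\subseteq X$, $B\subseteq Y$. Then $X+_{f,g}Y$ is the set $X\sqcup Y$ with the topology whose closed sets are the $D$ with $D\cap X$ closed in $X$, $D\cap Y$ closed in $Y$, $f(D\cap X)\subseteq D$ and $g(D\cap Y)\subseteq D$. *)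

From HB Require Import structures.
From mathcomp Require Import all_boot all_classical topology.
Set Implicit Arguments. Unset Strict Implicit. Unset Printing Implicit Defensive.
Local Open Scope classical_set_scope.

(* All spaces are realised as subsets of one ambient topological space T;
   the disjoint union X ⊔ Y is T itself when X, Y partition T. *)

Definition rel_closed (T : topologicalType) (X A : set T) : Prop :=
  exists C : set T, closed C /\ A = C `&` X.

Definition admissible_map (T : topologicalType) (X Y : set T)
    (f : set T -> set T) : Prop :=
  [/\ (forall A, rel_closed X A -> rel_closed Y (f A)),
      f set0 = set0 &
      (forall A1 A2, rel_closed X A1 -> rel_closed X A2 ->
         f (A1 `|` A2) = f A1 `|` f A2)].

Definition admissible_pair (T : topologicalType) (X Y : set T)
    (f g : set T -> set T) : Prop :=
  [/\ admissible_map X Y f, admissible_map Y X g,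
      (forall A, rel_closed X A -> g (f A) `<=` A) &
      (forall B, rel_closed Y B -> f (g B) `<=` B)].

Definition sum_closed (T : topologicalType) (X Y : set T)
    (f g : set T -> set T) (D : set T) : Prop :=
  [/\ rel_closed X (D `&` X), rel_closed Y (D `&` Y),
      f (D `&` X) `<=` D & g (D `&` Y) `<=` D].

(* The closure of a set is the union of the closures of its traces on X and
   Y, and a relatively closed trace is the trace of its own closure; hence a
   set is closed exactly when both traces are relatively closed and the
   closure of each trace stays inside the set.  As X is open, Y is closed, so
   closure (closure A ∩ Y) misses X and g ∘ f is empty; f ∘ g ≤ id needs no
   hypothesis on X or Y. *)
From mathcomp Require Import all_boot all_classical topology.
Set Implicit Arguments. Unset Strict Implicit. Unset Printing Implicit Defensive.
Local Open Scope classical_set_scope.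

Lemma closure_sub_closed (T : topologicalType) (A C : set T) :
  closed C -> A `<=` C -> closure A `<=` C.
Proof. by rewrite closureE; exact: smallest_sub. Qed.

Lemma subset_by_cover (T : Type) (X Y S D : set T) :
  X `|` Y = setT -> S `&` X `<=` D -> S `&` Y `<=` D -> S `<=` D.
Proof.
move=> XYT SXD SYD z Sz.
have : (X `|` Y) z by rewrite XYT.
by case=> [Xz | Yz]; [exact: SXD | exact: SYD].
Qed.

Lemma partition_closedC (T : topologicalType) (X Y : set T) :
  X `&` Y = set0 -> X `|` Y = setT -> open X -> closed Y.
Proof.
move=> XY0 XYT oX; suff -> : Y = ~` X by rewrite closedC.
apply/seteqP; split=> z.
- by move=> Yz Xz; have : (X `&` Y) z by []; rewrite XY0.
- by move=> nXz; have [] : (X `|` Y) z by rewrite XYT.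
Qed.

Section RelativeClosure.
Variables (T : topologicalType) (X : set T).

Lemma rel_closedI (D : set T) : closed D -> rel_closed X (D `&` X).
Proof. by move=> cD; exists D. Qed.

Lemma closureI_rel_closed (A : set T) : rel_closed X A -> closure A `&` X = A.
Proof.
move=> [C [cC ->]]; apply/seteqP; split; last first.
  by move=> z Az; split; [exact: subset_closure | case: Az].
by move=> z [/(closure_sub_closed cC (@subIsetl _ C X))].
Qed.

Lemma closureI_admissible (Y : set T) :
  admissible_map Y X (fun A => closure A `&` X).
Proof.
split.
- by move=> A _; exact/rel_closedI/closed_closure.
- by rewrite closure0 set0I.
- by move=> A1 A2 _ _; rewrite closureU setIUl.
Qed.

Lemma closureI_closureI_sub (Y B : set T) :
  rel_closed X B -> closure (closure B `&` Y) `&` X `<=` B.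
Proof.
move=> /closureI_rel_closed {2}<-; apply: setSI.
by apply: closure_sub_closed; [exact: closed_closure | exact: subIsetl].
Qed.

Lemma closureI_trace_sub (Y D : set T) : X `|` Y = setT ->
  rel_closed X (D `&` X) -> closure (D `&` X) `&` Y `<=` D ->
  closure (D `&` X) `<=` D.
Proof.
move=> XYT /closureI_rel_closed DX_closed; apply: subset_by_cover XYT _.
by rewrite DX_closed; exact: subIsetl.
Qed.

End RelativeClosure.

Section ClosurePair.
Variables (Z : topologicalType) (X Y : set Z).
Let f := fun A : set Z => closure A `&` Y.
Let g := fun B : set Z => closure B `&` X.

Lemma closure_pair_admissible :
  closed Y -> X `&` Y = set0 -> admissible_pair X Y f g.
Proof.
move=> cY XY0; split; [exact: closureI_admissible | exact: closureI_admissible | |].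
- move=> A _ z [/(closure_sub_closed cY (@subIsetr _ _ _)) Yz Xz].
  by have : (X `&` Y) z by []; rewrite XY0.
- by move=> B; exact: closureI_closureI_sub.
Qed.

Lemma closed_sum_closedP (D : set Z) :
  X `|` Y = setT -> closed D <-> sum_closed X Y f g D.
Proof.
move=> XYT; split=> [cD | [DX_closed DY_closed fD gD]].
  have closureI_sub W : closure (D `&` W) `<=` D.
    by apply: closure_sub_closed cD _; exact: subIsetl.
  by split; [exact: rel_closedI | exact: rel_closedI
            | move=> z [/closureI_sub] | move=> z [/closureI_sub]].
apply/closure_id/seteqP; split; first exact: subset_closure.
rewrite -[X in closure X]setIT -XYT setIUr closureU subUset; split.
- exact: closureI_trace_sub XYT DX_closed fD.
- by apply: closureI_trace_sub DY_closed gD; rewrite setUC.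
Qed.

End ClosurePair.

Theorem mainTheorem9 (Z : topologicalType) (X Y : set Z) :
  X `&` Y = set0 -> X `|` Y = setT -> open X ->
  let f := fun A : set Z => closure A `&` Y in
  let g := fun B : set Z => closure B `&` X in
  admissible_pair X Y f g /\
  (forall D : set Z, closed D <-> sum_closed X Y f g D).
Proof.
move=> XY0 XYT oX f g; have cY := partition_closedC XY0 XYT oX.
split; first exact: closure_pair_admissible cY XY0.
by move=> D; exact: closed_sum_closedP.
Qed.
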